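(* Let $\alpha$ be a unit-speed curve in $\mathbb{R}^3$ with nonvanishing curvature, let $\alpha_T$ be its tangent indicatrix with arc length $s_T$ and Frenet apparatus $\{T_T,N_T,B_T,\kappa_T,\tau_T\}$, and let $\beta$ be an evolute-direction curve of $\alpha_T$ (an $X$-direction curve of $\alpha_T$ with $N_\beta=T_T$). Then there is an antiderivative $\varphi=\int\tau_T\,ds_T$ of $\tau_T$ with respect to $s_T$ such that $$\frac{\tau_\beta}{\kappa_\beta}=-\cot\varphi.$$ Moreover, $$\frac{\tau_T}{\kappa_T}=\frac{\kappa_\beta^2}{(\kappa_\beta^2+\tau_\beta^2)^{3/2}}\,\frac{d}{ds_T}\Big(\frac{\tau_\beta}{\kappa_\beta}\Big).$$
   Context: Let $\alpha:I\subset\mathbb{R}\to\mathbb{R}^3$ be a unit-speed curve with curvature $\kappa>0$, torsion $\tau$ and Frenet frame $\{T,N,B\}$. The tangent indicatrix of $\alpha$ is the curve $\alpha_T=T$ on the unit sphere. Its arc length is $s_T=\int\kappa\,ds$. Its Frenet apparatus is $\{T_T,N_T,B_T,\kappa_T,\tau_T\}$, with $\frac{dT_T}{ds_T}=\kappa_TN_T$, $\frac{dN_T}{ds_T}=-\kappa_TT_T+\tau_TB_T$ and $\frac{dB_T}{ds_T}=-\tau_TN_T$. Let $x,y,z$ be real functions of $s_T$ with $x^2+y^2+z^2=1$, and set $X=xT_T+yN_T+zB_T$. An integral curve $\beta$ of $X$, meaning $d\beta/ds_T=X$, is an $X$-direction curve of $\alpha_T$. It has unit speed with arc length $s_T$.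 It is regarded as a Frenet curve with frame $\{T_\beta=X,N_\beta,B_\beta\}$, curvature $\kappa_\beta>0$ and torsion $\tau_\beta$, with derivatives taken with respect to $s_T$. $\beta$ is an evolute-direction curve of $\alpha_T$ if $N_\beta=T_T$. *)

From Stdlib Require Import Reals.
From Coquelicot Require Import Coquelicot.
Open Scope R_scope.

(* Vectors of R^3 as triples; Coquelicot's product normed-module structure
   gives componentwise derivatives [is_derive] for curves R -> vec3. *)
Definition vec3 : Type := (R * R * R)%type.

Definition vadd (u v : vec3) : vec3 :=
  let '(u1, u2, u3) := u in let '(v1, v2, v3) := v in (u1 + v1, u2 + v2, u3 + v3).

Definition vscal (a : R) (u : vec3) : vec3 :=
  let '(u1, u2, u3) := u in (a * u1, a * u2, a * u3).

Definition dot (u v : vec3) : R :=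
  let '(u1, u2, u3) := u in let '(v1, v2, v3) := v in u1 * v1 + u2 * v2 + u3 * v3.

Definition cross (u v : vec3) : vec3 :=
  let '(u1, u2, u3) := u in let '(v1, v2, v3) := v in
  (u2 * v3 - u3 * v2, u3 * v1 - u1 * v3, u1 * v2 - u2 * v1).

Definition cot (x : R) : R := cos x / sin x.

Definition oint (a b : Rbar) (x : R) : Prop := Rbar_lt a x /\ Rbar_lt x b.

Definition frenet_apparatus (D : R -> Prop) (T N B : R -> vec3) (k tau : R -> R) : Prop :=
  forall t, D t ->
    dot (T t) (T t) = 1 /\ dot (N t) (N t) = 1 /\ dot (T t) (N t) = 0 /\
    B t = cross (T t) (N t) /\ 0 < k t /\
    is_derive T t (vscal (k t) (N t)) /\
    is_derive N t (vadd (vscal (- k t) (T t)) (vscal (tau t) (B t))) /\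
    is_derive B t (vscal (- tau t) (N t)).

(* Write the unit tangent of beta as X = x T_T + y N_T + z B_T.  Since
   N_beta = T_T is orthogonal to X, x = 0 and (y, z) is a unit vector, which
   the Frenet equations of alpha_T rotate: y' = tau_T z, z' = -tau_T y.
   Differentiating <X, T_T> = 0 and <B_beta, T_T> = 0 gives
   kappa_beta = -kappa_T y > 0 and tau_beta = kappa_T z, so
   (y, z) = -(sin phi, cos phi) with phi' = tau_T, tau_beta / kappa_beta = -z / y
   = -cot phi has derivative tau_T / y^2, and kappa_beta^2 + tau_beta^2 = kappa_T^2. *)

From Stdlib Require Import Reals Lra.
From Coquelicot Require Import Coquelicot.
Open Scope R_scope.

Definition frame_comb (x y z : R) (T N B : vec3) : vec3 :=
  vadd (vadd (vscal x T) (vscal y N)) (vscal z B).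

Lemma dot_comm u v : dot u v = dot v u.
Proof. destruct u as [[? ?] ?], v as [[? ?] ?]; simpl; ring. Qed.

Lemma dot_vaddl u v w : dot (vadd u v) w = dot u w + dot v w.
Proof. destruct u as [[? ?] ?], v as [[? ?] ?], w as [[? ?] ?]; simpl; ring. Qed.

Lemma dot_vaddr u v w : dot w (vadd u v) = dot w u + dot w v.
Proof. destruct u as [[? ?] ?], v as [[? ?] ?], w as [[? ?] ?]; simpl; ring. Qed.

Lemma dot_vscall k u w : dot (vscal k u) w = k * dot u w.
Proof. destruct u as [[? ?] ?], w as [[? ?] ?]; simpl; ring. Qed.

Lemma dot_vscalr k u w : dot w (vscal k u) = k * dot w u.
Proof. destruct u as [[? ?] ?], w as [[? ?] ?]; simpl; ring. Qed.

Lemma dot_crossl u v : dot (cross u v) u = 0.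
Proof. destruct u as [[? ?] ?], v as [[? ?] ?]; simpl; ring. Qed.

Lemma dot_crossr u v : dot (cross u v) v = 0.
Proof. destruct u as [[? ?] ?], v as [[? ?] ?]; simpl; ring. Qed.

Lemma dot_cross_cross u v :
  dot (cross u v) (cross u v) = dot u u * dot v v - dot u v ^ 2.
Proof. destruct u as [[? ?] ?], v as [[? ?] ?]; simpl; ring. Qed.

Lemma dot_cross_swap u v w : dot (cross u v) w = dot u (cross v w).
Proof. destruct u as [[? ?] ?], v as [[? ?] ?], w as [[? ?] ?]; simpl; ring. Qed.

Section OrthonormalFrame.

Variables (T N : vec3) (x y z : R).
Hypotheses (HTT : dot T T = 1) (HNN : dot N N = 1) (HTN : dot T N = 0).

Lemma frame_comb_dotT : dot (frame_comb x y z T N (cross T N)) T = x.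
Proof.
  unfold frame_comb; rewrite !dot_vaddl, !dot_vscall, (dot_comm N), HTN, dot_crossl, HTT.
  ring.
Qed.

Lemma frame_comb_dotN : dot (frame_comb x y z T N (cross T N)) N = y.
Proof.
  unfold frame_comb; rewrite !dot_vaddl, !dot_vscall, HTN, dot_crossr, HNN.
  ring.
Qed.

Lemma frame_comb_dotB : dot (frame_comb x y z T N (cross T N)) (cross T N) = z.
Proof.
  unfold frame_comb; rewrite !dot_vaddl, !dot_vscall, dot_cross_cross, HTT, HNN, HTN.
  rewrite (dot_comm T), dot_crossl, (dot_comm N), dot_crossr.
  ring.
Qed.

End OrthonormalFrame.

Lemma is_derive_fst {V W : NormedModule R_AbsRing} (f : R -> V * W) t l :
  is_derive f t l -> is_derive (fun u => fst (f u)) t (fst l).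
Proof.
  intros H; apply filterdiff_ext_lin with (fun h => fst (scal h l)); [| reflexivity].
  eapply filterdiff_comp; [exact H |].
  apply filterdiff_linear, is_linear_fst.
Qed.

Lemma is_derive_snd {V W : NormedModule R_AbsRing} (f : R -> V * W) t l :
  is_derive f t l -> is_derive (fun u => snd (f u)) t (snd l).
Proof.
  intros H; apply filterdiff_ext_lin with (fun h => snd (scal h l)); [| reflexivity].
  eapply filterdiff_comp; [exact H |].
  apply filterdiff_linear, is_linear_snd.
Qed.

Lemma dotE (u v : vec3) :
  dot u v = fst (fst u) * fst (fst v) + snd (fst u) * snd (fst v) + snd u * snd v.
Proof. destruct u as [[? ?] ?], v as [[? ?] ?]; reflexivity. Qed.

Lemma is_derive_dot (U V : R -> vec3) t U' V' :
  is_derive U t U' -> is_derive V t V' ->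
  is_derive (fun u => dot (U u) (V u)) t (dot U' (V t) + dot (U t) V').
Proof.
  intros HU HV.
  pose proof (is_derive_fst _ _ _ (is_derive_fst _ _ _ HU)) as U1.
  pose proof (is_derive_snd _ _ _ (is_derive_fst _ _ _ HU)) as U2.
  pose proof (is_derive_snd _ _ _ HU) as U3.
  pose proof (is_derive_fst _ _ _ (is_derive_fst _ _ _ HV)) as V1.
  pose proof (is_derive_snd _ _ _ (is_derive_fst _ _ _ HV)) as V2.
  pose proof (is_derive_snd _ _ _ HV) as V3.
  simpl in *.
  pose proof (is_derive_plus _ _ _ _ _
    (is_derive_plus _ _ _ _ _ (is_derive_mult _ _ _ _ _ U1 V1 Rmult_comm)
                              (is_derive_mult _ _ _ _ _ U2 V2 Rmult_comm))
    (is_derive_mult _ _ _ _ _ U3 V3 Rmult_comm)) as D.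
  eapply is_derive_ext; [intros u; symmetry; apply dotE |].
  match type of D with is_derive _ _ ?l =>
    replace (dot U' (V t) + dot (U t) V') with l end; [exact D |].
  rewrite !dotE; unfold plus, mult; simpl; ring.
Qed.

Lemma oint_locally c d t : oint c d t -> locally t (oint c d).
Proof. apply (open_and _ _ (open_Rbar_gt c) (open_Rbar_lt d)). Qed.

Lemma is_derive_oint_ext c d (f g : R -> R) t l :
  (forall u, oint c d u -> f u = g u) -> oint c d t ->
  is_derive g t l -> is_derive f t l.
Proof.
  intros Hfg Ht; apply is_derive_ext_loc.
  eapply filter_imp; [| exact (oint_locally c d t Ht)].
  intros u Hu; symmetry; auto.
Qed.

Lemma is_derive_oint_eq0 c d (f : R -> R) t l :
  (forall u, oint c d u -> f u = 0) -> oint c d t -> is_derive f t l -> l = 0.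
Proof.
  intros Hf Ht Hd.
  apply is_derive_unique in Hd.
  rewrite <- Hd; apply is_derive_unique.
  apply (is_derive_oint_ext c d _ (fun _ => 0) t 0 Hf Ht).
  apply (is_derive_const (V := R_NormedModule)).
Qed.

Lemma is_derive_rotation_ratio (y z : R -> R) (tau : R) t :
  is_derive y t (tau * z t) -> is_derive z t (- tau * y t) ->
  y t <> 0 -> y t ^ 2 + z t ^ 2 = 1 ->
  is_derive (fun u => - z u / y u) t (tau / y t ^ 2).
Proof.
  intros Dy Dz Hy Hyz.
  pose proof (is_derive_div _ _ _ _ _ (is_derive_opp _ _ _ Dz) Dy Hy) as D.
  replace (tau / y t ^ 2) with ((- (- tau * y t) * y t - - z t * (tau * z t)) / y t ^ 2);
    [exact D |].
  replace (- (- tau * y t) * y t - - z t * (tau * z t)) with (tau * (y t ^ 2 + z t ^ 2))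
    by ring.
  rewrite Hyz; field; auto.
Qed.

Lemma is_derive_PI2_plus_atan (w : R -> R) t w' :
  is_derive w t w' ->
  is_derive (fun u => PI / 2 + atan (w u)) t (w' / (1 + w t ^ 2)).
Proof.
  intros Dw.
  pose proof (proj2 (is_derive_Reals _ _ _) (derivable_pt_lim_atan (w t))) as Datan.
  pose proof (is_derive_plus _ _ _ _ _ (is_derive_const (V := R_NormedModule) (PI / 2) t)
                (is_derive_comp atan w t _ _ Datan Dw)) as D.
  replace (w' / (1 + w t ^ 2)) with (plus zero (scal w' (/ (1 + w t ^ 2))));
    [exact D |].
  unfold plus, zero, scal; simpl; unfold mult; simpl; field.
  pose proof (pow2_ge_0 (w t)); lra.
Qed.

Lemma cot_PI2_plus_atan w : - cot (PI / 2 + atan w) = w.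
Proof.
  unfold cot; rewrite cos_plus, sin_plus, cos_PI2, sin_PI2.
  assert (Hcos : 0 < cos (atan w)).
  { rewrite cos_atan; apply Rdiv_lt_0_compat; [lra |].
    apply sqrt_lt_R0; unfold Rsqr; nra. }
  transitivity (tan (atan w)); [unfold tan; field; lra | apply tan_atan].
Qed.

Lemma Rpower_sqr_3_2 k : 0 < k -> Rpower (k ^ 2) (3 / 2) = k ^ 3.
Proof.
  intros Hk.
  rewrite <- (Rpower_pow 2 k) by exact Hk.
  rewrite Rpower_mult.
  replace (INR 2 * (3 / 2)) with (INR 3) by (simpl; field).
  apply Rpower_pow; exact Hk.
Qed.

Section EvoluteDirection.

Variables (c d : Rbar) (TT NT BT : R -> vec3) (kT tauT : R -> R).
Variables (x y z : R -> R) (Nb Bb : R -> vec3) (kb taub : R -> R).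

Let X t := frame_comb (x t) (y t) (z t) (TT t) (NT t) (BT t).

Hypothesis HfrT : frenet_apparatus (oint c d) TT NT BT kT tauT.
Hypothesis Hxyz : forall t, oint c d t -> x t ^ 2 + y t ^ 2 + z t ^ 2 = 1.
Hypothesis Hfrb : frenet_apparatus (oint c d) X Nb Bb kb taub.
Hypothesis Hev : forall t, oint c d t -> Nb t = TT t.

Lemma X_coords t : oint c d t ->
  dot (X t) (TT t) = x t /\ dot (X t) (NT t) = y t /\ dot (X t) (BT t) = z t.
Proof.
  intros Ht; unfold X; destruct (HfrT t Ht) as (HTT & HNN & HTN & -> & _).
  split; [| split].
  - apply frame_comb_dotT; assumption.
  - apply frame_comb_dotN; assumption.
  - apply frame_comb_dotB; assumption.
Qed.

Lemma X_dot_TT t : oint c d t -> dot (X t) (TT t) = 0.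
Proof.
  intros Ht; destruct (Hfrb t Ht) as (_ & _ & HXN & _).
  rewrite <- (Hev t Ht); exact HXN.
Qed.

Lemma x_eq0 t : oint c d t -> x t = 0.
Proof.
  intros Ht; destruct (X_coords t Ht) as (<- & _); apply X_dot_TT, Ht.
Qed.

Lemma yz_unit t : oint c d t -> y t ^ 2 + z t ^ 2 = 1.
Proof.
  intros Ht; pose proof (Hxyz t Ht) as H; rewrite (x_eq0 t Ht) in H; lra.
Qed.

Lemma X_derive t : oint c d t -> is_derive X t (vscal (kb t) (TT t)).
Proof.
  intros Ht; destruct (Hfrb t Ht) as (_ & _ & _ & _ & _ & DX & _).
  rewrite <- (Hev t Ht); exact DX.
Qed.

Lemma kb_eq t : oint c d t -> kb t = - kT t * y t.
Proof.
  intros Ht.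
  destruct (HfrT t Ht) as (HTT & _ & _ & _ & _ & DTT & _).
  pose proof (is_derive_dot _ _ _ _ _ (X_derive t Ht) DTT) as D.
  apply (is_derive_oint_eq0 c d _ _ _ X_dot_TT Ht) in D.
  rewrite dot_vscall, dot_vscalr, HTT, (proj1 (proj2 (X_coords t Ht))) in D.
  lra.
Qed.

Lemma taub_eq t : oint c d t -> taub t = kT t * z t.
Proof.
  intros Ht.
  destruct (HfrT t Ht) as (HTT & _ & _ & HBT & _ & DTT & _).
  destruct (Hfrb t Ht) as (_ & _ & _ & HBb & _ & _ & _ & DBb).
  rewrite (Hev t Ht) in HBb, DBb.
  assert (Horth : forall u, oint c d u -> dot (Bb u) (TT u) = 0).
  { intros u Hu; destruct (Hfrb u Hu) as (_ & _ & _ & -> & _).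
    rewrite (Hev u Hu); apply dot_crossr. }
  pose proof (is_derive_dot _ _ _ _ _ DBb DTT) as D.
  apply (is_derive_oint_eq0 c d _ _ _ Horth Ht) in D.
  (* <B_beta, N_T> = <X x T_T, N_T> = <X, T_T x N_T> = <X, B_T> *)
  rewrite dot_vscall, dot_vscalr, HTT, HBb, dot_cross_swap, <- HBT,
    (proj2 (proj2 (X_coords t Ht))) in D.
  lra.
Qed.

Lemma is_derive_y t : oint c d t -> is_derive y t (tauT t * z t).
Proof.
  intros Ht.
  destruct (HfrT t Ht) as (_ & _ & HTN & _ & _ & _ & DNT & _).
  apply (is_derive_oint_ext c d y (fun u => dot (X u) (NT u)) t);
    [intros u Hu; symmetry; apply (X_coords u Hu) | exact Ht |].
  replace (tauT t * z t) with
    (dot (vscal (kb t) (TT t)) (NT t) +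
     dot (X t) (vadd (vscal (- kT t) (TT t)) (vscal (tauT t) (BT t)))).
  - exact (is_derive_dot _ _ _ _ _ (X_derive t Ht) DNT).
  - destruct (X_coords t Ht) as (HXT & _ & HXB).
    rewrite dot_vscall, dot_vaddr, !dot_vscalr, HTN, HXT, HXB, (x_eq0 t Ht).
    ring.
Qed.

Lemma is_derive_z t : oint c d t -> is_derive z t (- tauT t * y t).
Proof.
  intros Ht.
  destruct (HfrT t Ht) as (_ & _ & _ & HBT & _ & _ & _ & DBT).
  apply (is_derive_oint_ext c d z (fun u => dot (X u) (BT u)) t);
    [intros u Hu; symmetry; apply (X_coords u Hu) | exact Ht |].
  replace (- tauT t * y t) with
    (dot (vscal (kb t) (TT t)) (BT t) + dot (X t) (vscal (- tauT t) (NT t))).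
  - exact (is_derive_dot _ _ _ _ _ (X_derive t Ht) DBT).
  - rewrite dot_vscall, dot_vscalr, (proj1 (proj2 (X_coords t Ht))), HBT,
      (dot_comm (TT t)), dot_crossl.
    ring.
Qed.

Lemma y_lt0 t : oint c d t -> y t < 0.
Proof.
  intros Ht.
  destruct (HfrT t Ht) as (_ & _ & _ & _ & HkT & _).
  destruct (Hfrb t Ht) as (_ & _ & _ & _ & Hkb & _).
  rewrite (kb_eq t Ht) in Hkb.
  destruct (Rlt_or_le (y t) 0); [assumption | nra].
Qed.

Lemma taub_div_kb t : oint c d t -> taub t / kb t = - z t / y t.
Proof.
  intros Ht.
  destruct (HfrT t Ht) as (_ & _ & _ & _ & HkT & _).
  pose proof (y_lt0 t Ht).
  rewrite (kb_eq t Ht), (taub_eq t Ht); field; split; lra.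
Qed.

Lemma is_derive_minus_z_div_y t : oint c d t ->
  is_derive (fun u => - z u / y u) t (tauT t / y t ^ 2).
Proof.
  intros Ht; pose proof (y_lt0 t Ht).
  apply is_derive_rotation_ratio;
    [apply is_derive_y | apply is_derive_z | lra | apply yz_unit]; exact Ht.
Qed.

Lemma is_derive_taub_div_kb t : oint c d t ->
  is_derive (fun u => taub u / kb u) t (tauT t / y t ^ 2).
Proof.
  intros Ht.
  apply (is_derive_oint_ext c d _ _ t _ taub_div_kb Ht).
  apply is_derive_minus_z_div_y, Ht.
Qed.

Lemma is_derive_angle t : oint c d t ->
  is_derive (fun u => PI / 2 + atan (- z u / y u)) t (tauT t).
Proof.
  intros Ht.
  replace (tauT t) with ((tauT t / y t ^ 2) / (1 + (- z t / y t) ^ 2)).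
  - apply (is_derive_PI2_plus_atan (fun u => - z u / y u)).
    apply is_derive_minus_z_div_y, Ht.
  - pose proof (y_lt0 t Ht) as Hy.
    replace (1 + (- z t / y t) ^ 2) with ((y t ^ 2 + z t ^ 2) / y t ^ 2) by (field; lra).
    rewrite (yz_unit t Ht); field; lra.
Qed.

Lemma kb2_taub2 t : oint c d t -> kb t ^ 2 + taub t ^ 2 = kT t ^ 2.
Proof.
  intros Ht.
  rewrite (kb_eq t Ht), (taub_eq t Ht).
  transitivity (kT t ^ 2 * (y t ^ 2 + z t ^ 2)); [ring | rewrite (yz_unit t Ht); ring].
Qed.

Lemma evolute_direction_cot : exists phi : R -> R,
  (forall t, oint c d t -> is_derive phi t (tauT t)) /\
  (forall t, oint c d t -> taub t / kb t = - cot (phi t)).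
Proof.
  exists (fun u => PI / 2 + atan (- z u / y u)); split; intros t Ht.
  - apply is_derive_angle, Ht.
  - rewrite cot_PI2_plus_atan; apply taub_div_kb, Ht.
Qed.

Lemma evolute_direction_derive t : oint c d t ->
  ex_derive (fun u => taub u / kb u) t /\
  tauT t / kT t =
    kb t ^ 2 / Rpower (kb t ^ 2 + taub t ^ 2) (3 / 2) * Derive (fun u => taub u / kb u) t.
Proof.
  intros Ht.
  pose proof (is_derive_taub_div_kb t Ht) as D.
  split; [eexists; exact D |].
  destruct (HfrT t Ht) as (_ & _ & _ & _ & HkT & _).
  pose proof (y_lt0 t Ht).
  replace (Derive (fun u => taub u / kb u) t) with (tauT t / y t ^ 2)
    by (symmetry; apply is_derive_unique, D).
  rewrite (kb2_taub2 t Ht), (Rpower_sqr_3_2 _ HkT), (kb_eq t Ht).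
  field; split; lra.
Qed.

End EvoluteDirection.

Theorem corollary4p4
  (* the curve alpha, parameter s in the open interval I = (a,b) *)
  (a b : Rbar) (alpha T N B : R -> vec3) (kappa tau : R -> R)
  (Halpha : forall s, oint a b s -> is_derive alpha s (T s))
  (Hfr : frenet_apparatus (oint a b) T N B kappa tau)
  (* arc length s_T = sigma(s) of the tangent indicatrix, with sigma' = kappa,
     mapping I onto the open interval J = (c,d) *)
  (c d : Rbar) (sigma : R -> R)
  (Hsig : forall s, oint a b s -> is_derive sigma s (kappa s))
  (HsigI : forall s, oint a b s -> oint c d (sigma s))
  (HsigJ : forall t, oint c d t -> exists s, oint a b s /\ sigma s = t)
  (* tangent indicatrix alpha_T(s_T), alpha_T(sigma s) = T(s), with its Frenet
     apparatus w.r.t. s_T *)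
  (alphaT TT NT BT : R -> vec3) (kT tauT : R -> R)
  (HaT : forall s, oint a b s -> alphaT (sigma s) = T s)
  (HaTd : forall t, oint c d t -> is_derive alphaT t (TT t))
  (HfrT : frenet_apparatus (oint c d) TT NT BT kT tauT)
  (* X-direction curve beta of alpha_T *)
  (x y z : R -> R) (beta Nb Bb : R -> vec3) (kb taub : R -> R)
  (Hxyz : forall t, oint c d t -> x t ^ 2 + y t ^ 2 + z t ^ 2 = 1)
  (Hbeta : forall t, oint c d t ->
     is_derive beta t
       (vadd (vadd (vscal (x t) (TT t)) (vscal (y t) (NT t))) (vscal (z t) (BT t))))
  (Hfrb : frenet_apparatus (oint c d)
     (fun t => vadd (vadd (vscal (x t) (TT t)) (vscal (y t) (NT t))) (vscal (z t) (BT t)))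
     Nb Bb kb taub)
  (* evolute-direction condition N_beta = T_T *)
  (Hev : forall t, oint c d t -> Nb t = TT t) :
  (exists phi : R -> R,
     (forall t, oint c d t -> is_derive phi t (tauT t)) /\
     (forall t, oint c d t -> taub t / kb t = - cot (phi t))) /\
  (forall t, oint c d t ->
     ex_derive (fun u => taub u / kb u) t /\
     tauT t / kT t =
       kb t ^ 2 / Rpower (kb t ^ 2 + taub t ^ 2) (3 / 2)
       * Derive (fun u => taub u / kb u) t).
Proof.
  split.
  - exact (evolute_direction_cot c d TT NT BT kT tauT x y z Nb Bb kb taub HfrT Hxyz Hfrb Hev).
  - exact (evolute_direction_derive c d TT NT BT kT tauT x y z Nb Bb kb taub HfrT Hxyz Hfrb Hev).
Qed.
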